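(* Let $0<q<1$ and $q^*=2-q$. Let $X_1,X_2,\dots,X_n$ be i.i.d. real random variables. Then for all real $x$ and all $a>0$ with $(1-q)ax<1$, $$\mathrm{Prob}\left(\frac1n\sum_{k=1}^nX_k\ge x\right)\le\left[\exp_q(-ax)\right]^nA^n(a),\qquad A(a)=\mathbb{E}\exp_{q^*}(aX_1).$$
   Context: For $q\in(0,2)$, $q\ne1$, the $q$-deformed exponential is $\exp_q(u)=[1+(1-q)u]_+^{1/(1-q)}$ for real $u$ (value in $[0,+\infty]$), where $[u]_+=\max(u,0)$. *)

From HB Require Import structures.
From mathcomp Require Import all_boot all_order all_algebra.
From mathcomp Require Import all_classical all_reals all_analysis.
Set Implicit Arguments. Unset Strict Implicit. Unset Printing Implicit Defensive.
Import Order.TTheory GRing.Theory Num.Theory.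
Import numFieldNormedType.Exports.
Local Open Scope classical_set_scope.
Local Open Scope ring_scope.

(* q-deformed exponential exp_q(u) = [1+(1-q)u]_+^{1/(1-q)}, valued in [0,+oo].
   Convention: 0^e = 0 for e > 0 and 0^e = +oo for e < 0. *)
Definition expq (R : realType) (q u : R) : \bar R :=
  let b := 1 + (1 - q) * u in
  if 0 < b then ((b `^ (1 - q)^-1)%R)%:E
  else if 0 < 1 - q then 0%E else (+oo)%E.

Definition mutually_independent d (T : measurableType d) (R : realType)
  (P : probability T R) (n : nat) (X : nat -> T -> R) : Prop :=
  forall B : nat -> set R, (forall i, measurable (B i)) ->
    P (\bigcap_(i in [set i | (i < n)%N]) (X i @^-1` B i)) =
    (\prod_(i < n) P (X i @^-1` B i))%E.

Definition identically_distributed d (T : measurableType d) (R : realType)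
  (P : probability T R) (n : nat) (X : nat -> T -> R) : Prop :=
  forall i, (i < n)%N -> forall B : set R, measurable B ->
    P (X i @^-1` B) = P (X 0%N @^-1` B).

From HB Require Import structures.
From mathcomp Require Import all_boot all_order all_algebra.
From mathcomp Require Import all_classical all_reals all_analysis.
From mathcomp Require Import measurable_realfun.
From mathcomp Require Import ring.
Import Order.TTheory GRing.Theory Num.Theory.
Import numFieldNormedType.Exports.
Import HBNNSimple.
Local Open Scope classical_set_scope.
Local Open Scope ring_scope.

(* With c = (1-q)a and p = 1/(1-q) we have exp_q(-ax) = (1-cx)^p and
   exp_{2-q}(ay) = (1-cy)^(-p), the latter being +oo when 1 - cy <= 0.  If X_1
   falls with positive probability where 1 - cX_1 <= 0, then A(a) = +oo and
   there is nothing to prove.  Otherwise almost surely every 1 - cX_k is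
   positive, and on the event {mean >= x} the AM-GM inequality gives
   prod_k (1 - cX_k) <= (1 - c mean)^n <= (1 - cx)^n; raising this to the power
   p bounds the indicator of the event by exp_q(-ax)^n prod_k exp_{2-q}(aX_k).
   By independence and equidistribution the expectation of the product is at
   most A(a)^n: with equality for simple functions, obtained by expanding one
   factor at a time into indicators, and then by monotone convergence. *)

Section nonnegative_integral.
Context d (T : measurableType d) (R : realType) (mu : {measure set T -> \bar R}).
Local Open Scope ereal_scope.

(* The integral of a nonnegative function is a supremum over simple functions
   below it, so monotonicity needs no measurability. *)
Lemma ge0_le_integral_nonmeasurable (f1 f2 : T -> \bar R) :
  (forall x, 0 <= f1 x) -> (forall x, f1 x <= f2 x) ->
  \int[mu]_x f1 x <= \int[mu]_x f2 x.
Proof.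
move=> f1_ge0 f12; rewrite !ge0_integralTE // => [|x]; last exact: le_trans (f12 x).
apply: ereal_sup_le => _ [h /= hf1 <-]; exists h => //= x.
exact: le_trans (f12 x).
Qed.

Lemma ge0_integral_pinfty (f : T -> \bar R) (A : set T) :
  measurable A -> 0 < mu A -> (forall x, 0 <= f x) ->
  (forall x, A x -> f x = +oo) -> \int[mu]_x f x = +oo.
Proof.
move=> mA muA_gt0 f_ge0 fA; apply/eqP; rewrite eq_le leey /=.
have <- : \int[mu]_x (+oo * (\1_A x)%:E) = +oo.
  rewrite ge0_integralZl //; last by apply/measurable_EFinP; exact: measurable_indic.
  by rewrite integral_indic // setIT gt0_mulye.
apply: ge0_le_integral_nonmeasurable => x; first by rewrite mule_ge0 ?leey ?lee_fin.
rewrite indicE; have [/set_mem/fA ->|_] := boolP (x \in A); last by rewrite mule0.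
exact: leey.
Qed.

Lemma integral_indic_comp (Y : {mfun T >-> R}) (A : set R) : measurable A ->
  \int[mu]_w (\1_A (Y w))%:E = mu (Y @^-1` A).
Proof.
move=> mA; transitivity (\int[mu]_w (\1_(Y @^-1` A) w)%:E) => //.
by rewrite integral_indic ?setIT //; exact: measurable_funPTI.
Qed.

Lemma integral_nnsfun_comp (Y : {mfun T >-> R}) (s : {nnsfun R >-> R}) :
  \int[mu]_w (s (Y w))%:E =
  \sum_(r \in range s) r%:E * mu (Y @^-1` (s @^-1` [set r])).
Proof.
have ms r : measurable (Y @^-1` (s @^-1` [set r])).
  by apply: measurable_funPTI; exact: measurable_sfunP.
transitivity (\int[mu]_w (\sum_(r \in range s)
    (r * \1_(Y @^-1` (s @^-1` [set r])) w)%:E)).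
  by apply: eq_integral => w _; rewrite fimfunE fsumEFin.
rewrite ge0_integral_fsum //; last 2 first.
- move=> r; apply/measurable_EFinP; apply: measurable_funM.
    exact: measurable_cst.
  exact: measurable_indic.
- move=> r w _; rewrite lee_fin; have [r_lt0|r_ge0] := ltP r 0%R.
    by rewrite preimage_nnfun0 // preimage_set0 indic0 mulr0.
  by rewrite mulr_ge0.
apply: eq_fsbigr => r _.
rewrite (@integralZl_indic _ _ _ _ _ measurableT
  (fun r => Y @^-1` (s @^-1` [set r]))) //; last first.
  by move=> r_lt0; rewrite /= preimage_nnfun0 // preimage_set0.
by rewrite integral_indic ?setIT.
Qed.

End nonnegative_integral.

Lemma probability_le_integral d (T : measurableType d) (R : realType)
    (P : probability T R) (A O : set T) (f : T -> \bar R) :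
  measurable A -> measurable O -> P O = 1%E -> (forall w, 0 <= f w)%E ->
  (forall w, A w -> O w -> 1 <= f w)%E -> (P A <= \int[P]_w f w)%E.
Proof.
move=> mA mO PO1 f_ge0 f_ge1.
have PnO : P (~` O) = 0%E by rewrite probability_setC // PO1 subee.
rewrite (measureDI _ mA mO) (subset_measure0 _ _ _ PnO) ?add0e; last 3 first.
- exact: measurableD.
- exact: measurableC.
- by move=> w [].
apply: (@le_trans _ _ (\int[P]_w (\1_(A `&` O) w)%:E)%E).
  by rewrite integral_indic ?setIT //; exact: measurableI.
apply: ge0_le_integral_nonmeasurable => w; first by rewrite lee_fin.
rewrite indicE; have [/set_mem [Aw Ow]|_] := boolP (w \in A `&` O); first exact: f_ge1.
exact: f_ge0.
Qed.

Lemma big_dfwith {V : Type} {idx : V} {op : Monoid.com_law idx} {U : Type}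
    (F : nat -> U -> V) {f : nat -> U} {n m : nat} {u : U} (lt_mn : (m < n)%N) :
  \big[op/idx]_(i < n) F i (dfwith f m u i) =
  op (F m u) (\big[op/idx]_(i < n | i != Ordinal lt_mn) F i (f i)).
Proof.
rewrite (bigD1 (Ordinal lt_mn)) //= dfwithin; congr (op _ _).
apply: eq_bigr => i ne_m; rewrite dfwithout //.
by apply: contraNneq ne_m => mi; apply/eqP/val_inj.
Qed.

Section independent_product.
Context {d : measure_display} {T : measurableType d} {R : realType}
  {P : probability T R} {n : nat} {X : nat -> {mfun T >-> R}}.
Hypothesis hind : mutually_independent P n (fun i => X i).
Local Open Scope ereal_scope.

Definition factorizes (f : nat -> R -> R) :=
  \int[P]_w (\prod_(i < n) f i (X i w))%:E =
  \prod_(i < n) \int[P]_w (f i (X i w))%:E.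

Lemma factorizes_indic (B : nat -> set R) : (forall i, measurable (B i)) ->
  factorizes (fun i => \1_(B i)).
Proof.
move=> mB; pose C := \bigcap_(i in [set i | (i < n)%N]) (X i @^-1` B i).
have mC : measurable C.
  by apply: bigcap_measurableType => i _; exact: measurable_funPTI.
transitivity (\int[P]_w (\1_C w)%:E).
  apply: eq_integral => w _; congr EFin; rewrite indicE.
  have [/set_mem Cw|nCw] := boolP (w \in C).
    by rewrite big1 // => i _; rewrite indicE mem_set //; exact: (Cw i (ltn_ord i)).
  have [i] : exists i, ~ ((i < n)%N -> B i (X i w)).
    by apply/existsNP => allB; move/negP: nCw; apply; apply/mem_set => i /allB.
  move=> /not_implyP [lt_in nBi].
  by rewrite (bigD1 (Ordinal lt_in)) //= indicE memNset // mul0r.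
rewrite integral_indic // setIT; etransitivity; first exact: hind.
by apply: eq_bigr => i _; rewrite integral_indic_comp.
Qed.

Lemma factorizes_dfwith_nnsfun (f : nat -> R -> R) m (s : {nnsfun R >-> R}) :
  (m < n)%N -> (forall i, measurable_fun setT (f i)) ->
  (forall i y, (0 <= f i y)%R) ->
  (forall A, measurable A -> factorizes (dfwith f m \1_A)) ->
  factorizes (dfwith f m (s : R -> R)).
Proof.
move=> lt_mn mf f_ge0 f_indic; pose im := Ordinal lt_mn.
pose K := \prod_(i < n | i != im) \int[P]_w (f i (X i w))%:E.
have prod_dfwith (g : R -> R) w : (\prod_(i < n) dfwith f m g i (X i w) =
    g (X m w) * \prod_(i < n | i != im) f i (X i w))%R.
  exact: (big_dfwith (fun i (h : R -> R) => h (X i w)) lt_mn).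
have int_dfwith (g : R -> R) : \prod_(i < n) \int[P]_w (dfwith f m g i (X i w))%:E =
    \int[P]_w (g (X m w))%:E * K.
  exact: (big_dfwith (fun i (h : R -> R) => \int[P]_w (h (X i w))%:E) lt_mn).
(* Expanding [s] as [\sum_r r 1_(s = r)] in coordinate [m] reduces to indicators. *)
pose F r w := (\prod_(i < n) dfwith f m \1_(s @^-1` [set r]) i (X i w))%R.
have F_lt0 r w : (r < 0)%R -> F r w = 0%R.
  by move=> r_lt0; rewrite /F prod_dfwith preimage_nnfun0 // indic0 mul0r.
have F_ge0 r w : (0 <= F r w)%R.
  apply: prodr_ge0 => i _; have [<-|ne] := eqVneq m i; last by rewrite dfwithout.
  by rewrite dfwithin.
have mF r : measurable_fun setT (F r).
  apply: measurable_prod => i _; apply: measurableT_comp => //.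
  have [<-|ne] := eqVneq m i; last by rewrite dfwithout.
  by rewrite dfwithin; apply: measurable_indic; exact: measurable_sfunP.
have int_F r : \int[P]_w (r%:E * (F r w)%:E) = r%:E * P (X m @^-1` (s @^-1` [set r])) * K.
  have [r_lt0|r_ge0] := ltP r 0%R.
    rewrite preimage_nnfun0 // preimage_set0 measure0 mule0 mul0e.
    by apply: integral0_eq => w _; rewrite F_lt0 // mule0.
  rewrite ge0_integralZl_EFin //; last 2 first.
  - by move=> w _; rewrite lee_fin.
  - exact/measurable_EFinP.
  rewrite f_indic; last exact: measurable_sfunP.
  by rewrite int_dfwith integral_indic_comp ?muleA //; exact: measurable_sfunP.
rewrite /factorizes int_dfwith.
transitivity (\int[P]_w (\sum_(r \in range s) r%:E * (F r w)%:E)).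
  apply: eq_integral => w _; rewrite prod_dfwith fimfunE mulr_fsuml fsumEFin //.
  by congr EFin; apply: eq_fsbigr => r _; rewrite /F prod_dfwith mulrA.
rewrite ge0_integral_fsum //; last 2 first.
- by move=> r; apply/measurable_EFinP; apply: measurable_funM.
- move=> r w _; have [r_lt0|r_ge0] := ltP r 0%R; first by rewrite F_lt0 // mule0.
  by rewrite -EFinM lee_fin mulr_ge0.
under eq_fsbigr do rewrite int_F.
rewrite integral_nnsfun_comp !fsbig_finite //= ge0_sume_distrl //.
move=> r _; have [r_lt0|r_ge0] := ltP r 0%R.
  by rewrite preimage_nnfun0 // preimage_set0 measure0 mule0.
by rewrite mule_ge0.
Qed.

Lemma factorizes_nnsfun (t : nat -> {nnsfun R >-> R}) : factorizes (fun i => t i).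
Proof.
pose F m (B : nat -> set R) i := if (i < m)%N then (t i : R -> R) else \1_(B i).
suff Fn m : (m <= n)%N -> forall B, (forall i, measurable (B i)) -> factorizes (F m B).
  have := Fn n (leqnn n) (fun=> setT) (fun=> measurableT); rewrite /factorizes /F.
  by under eq_integral do under eq_bigr do rewrite ltn_ord;
    under eq_bigr do rewrite ltn_ord.
elim: m => [_ B mB|m IH lt_mn B mB]; first exact: factorizes_indic.
have -> : F m.+1 B = dfwith (F m B) m (t m : R -> R).
  apply/funext => i; rewrite /F; have [<-|ne] := eqVneq m i.
    by rewrite dfwithin ltnSn.
  by rewrite dfwithout // ltnS leq_eqVlt eq_sym (negbTE ne).
apply: factorizes_dfwith_nnsfun => // [i|i y|A mA].
- rewrite /F; case: ifP => _; [exact: measurable_funP|exact: measurable_indic].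
- by rewrite /F; case: ifP.
have -> : dfwith (F m B) m \1_A = F m (dfwith B m A).
  apply/funext => i; rewrite /F; have [<-|ne] := eqVneq m i.
    by rewrite !dfwithin ltnn.
  by rewrite !dfwithout.
apply: IH => [|i]; first exact: ltnW.
by have [<-|ne] := eqVneq m i; rewrite ?dfwithin ?dfwithout.
Qed.

End independent_product.

Lemma lee_expn (R : realDomainType) (u v : \bar R) k :
  (0 <= u)%E -> (u <= v)%E -> (u ^+ k <= v ^+ k)%E.
Proof.
move=> u_ge0 uv; elim: k => [|k IH]; first by rewrite !expe0.
by rewrite !expeS; apply: lee_pmul => //; exact: expe_ge0.
Qed.

Section iid_product.
Context {d : measure_display} {T : measurableType d} {R : realType}
  {P : probability T R} {n : nat} {X : nat -> {mfun T >-> R}}.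
Hypotheses (hind : mutually_independent P n (fun i => X i))
  (hid : identically_distributed P n (fun i => X i)).
Local Open Scope ereal_scope.

Lemma integral_prod_nnsfun_iid (s : {nnsfun R >-> R}) :
  \int[P]_w (\prod_(i < n) s (X i w))%:E = (\int[P]_w (s (X 0%N w))%:E) ^+ n.
Proof.
rewrite (factorizes_nnsfun hind (fun=> s)).
have -> : \prod_(i < n) \int[P]_w (s (X i w))%:E =
    \prod_(i < n) \int[P]_w (s (X 0%N w))%:E.
  apply: eq_bigr => i _; rewrite !integral_nnsfun_comp; apply: eq_fsbigr => r _.
  by congr (_ * _); apply: hid => //; exact: measurable_sfunP.
by rewrite big_const_ord -Monoid.iteropE.
Qed.

Lemma ge0_integral_prod_iid_le (f : R -> R) :
  measurable_fun setT f -> (forall y, (0 <= f y)%R) ->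
  \int[P]_w (\prod_(i < n) f (X i w))%:E <= (\int[P]_w (f (X 0%N w))%:E) ^+ n.
Proof.
move=> mf f_ge0.
have [g [nd_g cvg_g]] := approximation measurableT ((measurable_EFinP _ _).2 mf)
  (fun y _ => f_ge0 y : 0 <= (f y)%:E).
have cvg_gf y : g^~ y @ \oo --> f y by exact: fine_cvg (cvg_g y I).
have g_le_f j y : (g j y <= f y)%R.
  rewrite -(cvg_lim _ (cvg_gf y)) //; apply: nondecreasing_cvgn_le.
    by move=> a b ab; exact/lefP/nd_g.
  by apply/cvg_ex; eexists; exact: cvg_gf.
pose G j w := (\prod_(i < n) g j (X i w))%:E.
have mG j : measurable_fun setT (G j).
  apply/measurable_EFinP; apply: measurable_prod => i _.
  exact: measurableT_comp (measurable_funP (g j)) (measurable_funP (X i)).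
have G_ge0 j w : 0 <= G j w by rewrite lee_fin; apply: prodr_ge0.
have nd_G w : nondecreasing_seq (G ^~ w).
  move=> a b ab; rewrite lee_fin; apply: ler_prod => i _.
  by apply/andP; split; [exact: fun_ge0|exact/lefP/nd_g].
have lim_G w : limn (G ^~ w) = (\prod_(i < n) f (X i w))%:E.
  apply/cvg_lim => //; apply/fine_cvgP; split; first exact: nearW.
  exact: (@cvg_big R 'I_n *%R 1%R xpredT mul_continuous nat \oo (index_enum _)
    (fun i j => g j (X i w)) (fun i => f (X i w))).
under eq_integral do rewrite -lim_G.
rewrite monotone_convergence //; apply: lime_le.
  apply: ereal_nondecreasing_is_cvgn => a b ab.
  by apply: ge0_le_integral => // w _; exact: nd_G.
apply: nearW => j; rewrite /G integral_prod_nnsfun_iid.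
apply: lee_expn; first by apply: integral_ge0 => w _; rewrite lee_fin.
apply: ge0_le_integral => //.
- by move=> w _; rewrite lee_fin.
- apply/measurable_EFinP.
  exact: measurableT_comp (measurable_funP (g j)) (measurable_funP (X 0%N)).
- by apply/measurable_EFinP; exact: measurableT_comp mf (measurable_funP (X 0%N)).
- by move=> w _; rewrite lee_fin g_le_f.
Qed.

End iid_product.

Lemma prod_affine_le_expn (R : realFieldType) n (c x : R) (Y : 'I_n -> R) :
  0 <= c -> (forall i, 0 <= 1 - c * Y i) -> x <= n%:R^-1 * \sum_(i < n) Y i ->
  \prod_(i < n) (1 - c * Y i) <= (1 - c * x) ^+ n.
Proof.
case: n Y => [|n] Y c_ge0 U_ge0 x_le_mean; first by rewrite big_ord0 expr0.
have sum_U : \sum_(i in predT) (1 - c * Y i) = n.+1%:R - c * \sum_(i < n.+1) Y i.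
  by rewrite sumrB -mulr_sumr sumr_const cardT size_enum_ord.
have n_gt0 : 0 < n.+1%:R :> R by rewrite ltr0n.
have mean_le : (\sum_(i in predT) (1 - c * Y i)) / n.+1%:R <= 1 - c * x.
  rewrite sum_U ler_pdivrMr // mulrBl mul1r lerD2l lerN2 -mulrA ler_wpM2l //.
  by rewrite -ler_pdivlMr // mulrC.
have mean_ge0 : 0 <= (\sum_(i in predT) (1 - c * Y i)) / n.+1%:R.
  by apply: divr_ge0; [apply: sumr_ge0 => i _|exact: ltW].
have := (@leif_AGM _ _ predT _ (fun i _ => U_ge0 i)).1; rewrite cardT size_enum_ord.
move=> /le_trans; apply; apply: lerXn2r => //; rewrite nnegrE //.
exact: le_trans mean_le.
Qed.

Lemma prod_powR (R : realType) (I : Type) (s : seq I) (F : I -> R) p :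
  (forall i, 0 <= F i) -> \prod_(i <- s) F i `^ p = (\prod_(i <- s) F i) `^ p.
Proof.
move=> F_ge0; elim: s => [|i s IH]; first by rewrite !big_nil powR1.
by rewrite !big_cons IH powRM //; exact: prodr_ge0.
Qed.

Lemma pinfty_expeS (R : realDomainType) k : ((+oo : \bar R) ^+ k.+1 = +oo)%E.
Proof. by elim: k => [|k IH] //; rewrite expeS IH mulyy. Qed.

Lemma expq_ge0 (R : realType) (q u : R) : (0 <= expq q u)%E.
Proof. by rewrite /expq; case: ifP => _; [rewrite lee_fin powR_ge0|case: ifP]. Qed.

Lemma expqE (R : realType) (q u : R) : 0 < 1 + (1 - q) * u ->
  expq q u = ((1 + (1 - q) * u) `^ (1 - q)^-1)%:E.
Proof. by rewrite /expq => ->. Qed.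

(* For [q < 1], [exp_{2-q}(u) = 1 / exp_q(-u)], with the convention 1/0 = +oo. *)
Lemma expq_conjE (R : realType) (q u : R) : q < 1 ->
  expq (2 - q) u = if 0 < 1 - (1 - q) * u
    then ((1 - (1 - q) * u) `^ (- (1 - q)^-1))%:E else +oo%E.
Proof.
move=> q_lt1; rewrite /expq (_ : 1 - (2 - q) = - (1 - q)); last by ring.
rewrite mulNr invrN; case: ifP => // _.
by rewrite oppr_gt0 subr_lt0 ltNge (ltW q_lt1).
Qed.

Section q_exponential_bound.
Context {R : realType} {q a : R}.
Hypotheses (q_lt1 : q < 1) (a_gt0 : 0 < a).

Let c := (1 - q) * a.
Let p := (1 - q)^-1.
Let good := [set y : R | 0 < 1 - c * y].

(* [y |-> exp_{2-q}(a y)] where it is finite, and 0 elsewhere. *)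
Definition expq_conj_fin y := (1 - c * y) `^ (- p) * \1_good y.

Let c_gt0 : 0 < c. Proof. by rewrite mulr_gt0 // subr_gt0. Qed.

Let measurable_affine : measurable_fun setT (fun y : R => 1 - c * y).
Proof. by apply: measurable_funB => //; apply: measurable_funM. Qed.

Let measurable_good : measurable good.
Proof.
rewrite (_ : good = (fun y => 1 - c * y) @^-1` `]0, +oo[); last first.
  by apply/seteqP; split => y; rewrite /= in_itv /= andbT.
by rewrite -[X in measurable X]setTI; exact: measurable_affine.
Qed.

Lemma expq_conj_fin_ge0 y : 0 <= expq_conj_fin y.
Proof. by rewrite mulr_ge0 ?powR_ge0. Qed.

Lemma measurable_expq_conj_fin : measurable_fun setT expq_conj_fin.
Proof.
apply: measurable_funM; last exact: measurable_indic.
exact: measurableT_comp (@measurable_powR R (- p)) measurable_affine.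
Qed.

Let expq_conj_aE y : expq (2 - q) (a * y) =
  if 0 < 1 - c * y then ((1 - c * y) `^ (- p))%:E else +oo%E.
Proof. by rewrite expq_conjE // mulrA. Qed.

Let expq_conj_fin_le y : ((expq_conj_fin y)%:E <= expq (2 - q) (a * y))%E.
Proof.
rewrite expq_conj_aE /expq_conj_fin indicE; case: ifPn => [good_y|_]; last exact: leey.
by rewrite mem_set // mulr1.
Qed.

Let one_le_expq_prod n x (Y : 'I_n -> R) :
  0 < 1 - c * x -> (forall i, good (Y i)) -> x <= n%:R^-1 * \sum_(i < n) Y i ->
  1 <= ((1 - c * x) `^ p) ^+ n * \prod_(i < n) expq_conj_fin (Y i).
Proof.
move=> cx_gt0 good_Y x_le_mean.
have U_ge0 i : 0 <= 1 - c * Y i := ltW (good_Y i).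
have prod_gt0 : 0 < \prod_(i < n) (1 - c * Y i) by apply: prodr_gt0 => i _; exact: good_Y.
have -> : \prod_(i < n) expq_conj_fin (Y i) = ((\prod_(i < n) (1 - c * Y i)) `^ p)^-1.
  rewrite -prod_powR // -prodfV; apply: eq_bigr => i _.
  by rewrite /expq_conj_fin indicE mem_set // mulr1 powRN.
have -> : ((1 - c * x) `^ p) ^+ n = ((1 - c * x) ^+ n) `^ p.
  by rewrite -powR_mulrn ?powR_ge0 // -powRrM -powR_mulrn ?ltW // -powRrM (mulrC p).
rewrite ler_pdivlMr ?powR_gt0 // mul1r.
apply: ge0_ler_powR; rewrite ?nnegrE.
- by rewrite invr_ge0 subr_ge0 ltW.
- exact: ltW.
- by rewrite exprn_ge0 // ltW.
- exact: prod_affine_le_expn (ltW c_gt0) U_ge0 x_le_mean.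
Qed.

Section probability_space.
Context {d : measure_display} {T : measurableType d} {P : probability T R}
  {n : nat} {X : nat -> {mfun T >-> R}}.
Local Open Scope ereal_scope.

Lemma integral_expq_conj_pinfty : 0 < P (X 0%N @^-1` ~` good) ->
  \int[P]_w expq (2 - q) (a * X 0%N w) = +oo.
Proof.
move=> bad_gt0.
apply: (@ge0_integral_pinfty _ _ _ P _ (X 0%N @^-1` ~` good)) => // [|w|w /= bad_w].
- by apply: measurable_funPTI; exact: measurableC.
- exact: expq_ge0.
- by rewrite expq_conj_aE ifN //; apply/negP.
Qed.

Lemma integral_expq_conj_fin_le :
  \int[P]_w (expq_conj_fin (X 0%N w))%:E <= \int[P]_w expq (2 - q) (a * X 0%N w).
Proof.
apply: ge0_le_integral_nonmeasurable => w; last exact: expq_conj_fin_le.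
by rewrite lee_fin expq_conj_fin_ge0.
Qed.

Hypotheses (hind : mutually_independent P n (fun i => X i))
  (hid : identically_distributed P n (fun i => X i)).

Lemma prob_mean_ge_le x : (0 < 1 - c * x)%R -> P (X 0%N @^-1` ~` good) = 0 ->
  P [set w | x <= n%:R^-1 * \sum_(k < n) X k w]%R <=
  (((1 - c * x) `^ p) ^+ n)%:E * \int[P]_w (\prod_(i < n) expq_conj_fin (X i w))%:E.
Proof.
move=> cx_gt0 bad0.
rewrite -ge0_integralZl_EFin //; last 3 first.
- by move=> w _; rewrite lee_fin prodr_ge0 // => i _; exact: expq_conj_fin_ge0.
- apply/measurable_EFinP; apply: measurable_prod => i _.
  exact: measurableT_comp measurable_expq_conj_fin (measurable_funP (X i)).
- by rewrite exprn_ge0 ?powR_ge0.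
under eq_integral do rewrite -EFinM.
apply: (@probability_le_integral _ _ _ P _
  (\bigcap_(i in [set i | (i < n)%N]) (X i @^-1` good))).
- pose S w := (n%:R^-1 * \sum_(k < n) X k w)%R.
  have mS : measurable_fun setT S.
    by apply: measurable_funM => //; apply: measurable_sum => k; exact: measurable_funP.
  rewrite (_ : [set w | _] = S @^-1` `[x, +oo[); last first.
    by apply/seteqP; split => w; rewrite /= in_itv /= andbT.
  by rewrite -[X in measurable X]setTI; exact: mS.
- by apply: bigcap_measurableType => i _; exact: measurable_funPTI.
- etransitivity; first exact: (hind (fun=> good) (fun=> measurable_good)).
  apply: big1 => i _; rewrite -[good]setCK -preimage_setC probability_setC; last first.
    by apply: measurable_funPTI; exact: measurableC.
  rewrite (_ : P _ = 0) ?sube0 //.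
  by rewrite -bad0; apply: hid => //; exact: measurableC.
- move=> w; rewrite lee_fin mulr_ge0 ?exprn_ge0 ?powR_ge0 //.
  by apply: prodr_ge0 => i _; exact: expq_conj_fin_ge0.
- move=> w mean_ge good_X; rewrite lee_fin; apply: one_le_expq_prod => // i.
  exact: (good_X i (ltn_ord i)).
Qed.

End probability_space.
End q_exponential_bound.

Theorem proposition3 (d : measure_display) (T : measurableType d) (R : realType)
  (P : probability T R) (q : R) (hq0 : 0 < q) (hq1 : q < 1)
  (n : nat) (hn : (0 < n)%N) (X : nat -> {RV P >-> R})
  (hind : mutually_independent P n (fun i => X i))
  (hid : identically_distributed P n (fun i => X i))
  (x a : R) (ha : 0 < a) (hxa : (1 - q) * a * x < 1) :
  (P [set w | (x <= (n%:R)^-1 * \sum_(k < n) X k w)%R] <=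
   (expq q (- (a * x))) ^+ n *
   (\int[P]_w expq (2 - q) (a * X 0%N w)) ^+ n)%E.
Proof.
have cx_gt0 : 0 < 1 - (1 - q) * a * x by rewrite subr_gt0.
rewrite expqE ?mulrN ?mulrA //.
set bad := P (X 0%N @^-1` ~` [set y | 0 < 1 - (1 - q) * a * y]).
have [bad0|bad_neq0] := eqVneq bad 0%E; last first.
  rewrite integral_expq_conj_pinfty //; last by rewrite lt0e bad_neq0 measure_ge0.
  rewrite -(prednK hn) pinfty_expeS muleC gt0_mulye ?leey //.
  by apply: expe_gt0; rewrite lte_fin powR_gt0.
apply: le_trans (prob_mean_ge_le hq1 ha hind hid _ cx_gt0 bad0) _.
rewrite EFin_expe; apply: lee_wpmul2l; first by rewrite expe_ge0 // lee_fin powR_ge0.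
apply: le_trans (ge0_integral_prod_iid_le hind hid _
  measurable_expq_conj_fin expq_conj_fin_ge0) _.
apply: lee_expn; last exact: integral_expq_conj_fin_le.
by apply: integral_ge0 => w _; rewrite lee_fin expq_conj_fin_ge0.
Qed.
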